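(* Let $X$ be a finite set and let $\mathcal{P}=\{X_1,\ldots,X_m\}$ be an $(m,k)$-partition of $X$ such that, for each $i\in\{1,\ldots,k\}$, $\mathcal{P}$ has exactly $m_i\ge1$ blocks of size $n_i\ge1$. Then \[|T(X,\mathcal{P})|=\prod_{i=1}^k\Bigg(\sum_{j=1}^k m_j n_j^{\,n_i}\Bigg)^{m_i}.\]
   Context: An $(m,k)$-partition is a partition with exactly $m$ blocks having exactly $k$ distinct block sizes (here $n_1,\ldots,n_k$ are the distinct block sizes). $T(X,\mathcal{P})$ is the set of all maps $f\colon X\to X$ such that for every block $B$ of $\mathcal{P}$ there is a block $C$ of $\mathcal{P}$ with $Bf\subseteq C$. *)

From mathcomp Require Import all_boot.
Set Implicit Arguments. Unset Strict Implicit. Unset Printing Implicit Defensive.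

Definition T_part (X : finType) (P : {set {set X}}) : {set {ffun X -> X}} :=
  [set f : {ffun X -> X} | [forall B in P, exists C in P, (f @: B) \subset C]].

From mathcomp Require Import all_boot.

Set Implicit Arguments. Unset Strict Implicit. Unset Printing Implicit Defensive.

(* A map f in T(X, P) is determined by its block map s : P -> P, where
   f(B) ⊆ s(B), together with an arbitrary choice of f(x) in s(B) for each
   x in B.  Hence |T(X, P)| = Σ_s Π_B |s(B)|^|B| = Π_B Σ_C |C|^|B|, and
   grouping the blocks by size gives the stated formula. *)

Lemma big_group_by_value (I J : finType) (T : eqType) (w : I -> T) (n : J -> T)
    (R : Type) (idx : R) (op : Monoid.com_law idx) (A : {pred I}) (G : T -> R) :
  injective n -> {in A, forall i, exists j, w i = n j} ->
  \big[op/idx]_(i in A) G (w i) =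
    \big[op/idx]_(j : J) \big[op/idx]_(i in A | w i == n j) G (n j).
Proof.
move=> n_inj w_n; rewrite -(exchange_big_dep predT) //=.
apply: eq_bigr => i Ai; have [j wj] := w_n i Ai.
rewrite (bigD1 j) /=; last by rewrite wj.
rewrite big1 ?Monoid.mulm1 ?wj // => j' /andP[/eqP nj' j'j].
by move: j'j; rewrite (n_inj j' j) ?eqxx // -nj'.
Qed.

Section PartitionMaps.

Variables (X : finType) (P : {set {set X}}).
Hypothesis partP : partition P [set: X].

Let tiP : trivIset P. Proof. by case/and3P: partP. Qed.

Let coverP : cover P = [set: X]. Proof. by case/and3P: partP => /eqP. Qed.

Lemma pblock_in x : pblock P x \in P.
Proof. by rewrite pblock_mem // coverP inE. Qed.

Lemma mem_pblock_self x : x \in pblock P x.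
Proof. by rewrite mem_pblock coverP inE. Qed.

Lemma prod_pblock (F : {set X} -> nat) :
  \prod_x F (pblock P x) = \prod_(B in P) F B ^ #|B|.
Proof.
rewrite -(eq_bigl _ _ (fun x => in_setT x)) -coverP big_trivIset //.
apply: eq_bigr => B PB; rewrite -prod_nat_const.
by apply: eq_bigr => x Bx; rewrite (def_pblock tiP PB Bx).
Qed.

Lemma T_part_pblock f B x y : f \in T_part P -> B \in P -> x \in B -> y \in B ->
  pblock P (f x) = pblock P (f y).
Proof.
rewrite inE => /forallP/(_ B)/implyP fB PB Bx By.
have /existsP[C /andP[PC fBC]] := fB PB.
have fC z : z \in B -> f z \in C by move=> Bz; apply: (subsetP fBC); apply: imset_f.
by rewrite !(def_pblock tiP PC) ?fC.
Qed.

Definition block_map (f : {ffun X -> X}) : {ffun {set X} -> {set X}} :=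
  [ffun B => if B \in P then
               if [pick x in B] is Some x then pblock P (f x) else set0
             else set0].

Lemma block_mapE f B : B \in P -> exists2 x, x \in B & block_map f B = pblock P (f x).
Proof.
move=> PB; rewrite ffunE PB; case: pickP => [x Bx | B0]; first by exists x.
have B_0 : B = set0 by apply/setP => y; rewrite inE B0.
by case/and3P: partP => _ _ /negP[]; rewrite -B_0.
Qed.

Lemma block_map_pfamily f : block_map f \in pfamily set0 P (fun _ => P).
Proof.
apply/pfamilyP; split => [|B PB].
  by apply/subsetP => B; rewrite !inE ffunE; case: ifP; rewrite ?eqxx.
by have [x _ ->] := block_mapE f PB; apply: pblock_in.
Qed.

Lemma T_part_block_mapP f (s : {ffun {set X} -> {set X}}) :
  s \in pfamily set0 P (fun _ => P) ->
  (f \in T_part P) && (block_map f == s) = (f \in family (fun x => s (pblock P x))).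
Proof.
case/pfamilyP => s_supp s_in; apply/andP/familyP => [[fT /eqP <-] x | fs].
  have [y By ->] := block_mapE f (pblock_in x).
  by rewrite -(T_part_pblock fT (pblock_in x) (mem_pblock_self x) By) mem_pblock_self.
have fB B y : B \in P -> y \in B -> f y \in s B.
  by move=> PB By; have := fs y; rewrite (def_pblock tiP PB By).
split.
  rewrite inE; apply/forallP => B; apply/implyP => PB; apply/existsP; exists (s B).
  by rewrite s_in //=; apply/subsetP => _ /imsetP[y By ->]; apply: fB.
apply/eqP/ffunP => B; have [PB | nPB] := boolP (B \in P).
  by have [y By ->] := block_mapE f PB; rewrite (def_pblock tiP (s_in B PB) (fB B y PB By)).
rewrite ffunE (negPf nPB); apply/esym/eqP.
by apply: contraNT nPB => sB; apply: (subsetP s_supp); rewrite inE.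
Qed.

Lemma card_T_part : #|T_part P| = \prod_(B in P) \sum_(C in P) #|C| ^ #|B|.
Proof.
rewrite (big_distr_big_dep set0) /= -sum1_card.
rewrite (partition_big block_map (mem (pfamily set0 P (fun _ => P)))) /=;
  last by move=> f _; apply: block_map_pfamily.
apply: eq_bigr => s s_fam.
rewrite sum1_card -prod_pblock (eq_card (fun f => T_part_block_mapP f s_fam)).
by rewrite card_family foldrE big_map big_enum.
Qed.

End PartitionMaps.

Theorem theorem6p1 (X : finType) (P : {set {set X}}) (k : nat)
    (n m : 'I_k -> nat) :
    partition P [set: X] ->
    injective n ->
    (forall i, 1 <= n i) ->
    (forall i, 1 <= m i) ->
    (forall i, #|[set B in P | #|B| == n i]| = m i) ->
    (forall B, B \in P -> exists i, #|B| = n i) ->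
    #|T_part P| = \prod_(i < k) (\sum_(j < k) m j * n j ^ n i) ^ m i.
Proof.
move=> partP n_inj _ _ card_blocks block_sizes.
have group_by_size R idx (op : Monoid.com_law idx) (G : nat -> R) :
    \big[op/idx]_(B in P) G #|B| =
      \big[op/idx]_(i < k) \big[op/idx]_(B in [set B in P | #|B| == n i]) G (n i).
  rewrite (big_group_by_value op G n_inj) => [|B /block_sizes //].
  by apply: eq_bigr => i _; apply: eq_bigl => B; rewrite inE.
have sum_pow e : \sum_(C in P) #|C| ^ e = \sum_(j < k) m j * n j ^ e.
  rewrite (group_by_size _ _ _ (fun c => c ^ e)).
  by apply: eq_bigr => j _; rewrite sum_nat_const card_blocks.
rewrite card_T_part //; under eq_bigr do rewrite sum_pow.
rewrite (group_by_size _ _ _ (fun c => \sum_(j < k) m j * n j ^ c)).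
by apply: eq_bigr => i _; rewrite prod_nat_const card_blocks.
Qed.
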